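(* Let $G_{\mathit{di}}$ be a knowledge connectivity graph whose sink component (vertex set $V_{\mathit{sink}}$) contains at least $2f+1$ correct processes. If the slices of the processes are defined by the slice construction below, then every correct process $i\in W$ has at least one quorum $Q$ composed entirely of correct processes, i.e. $i\in Q\subseteq W$.
   Context: Processes and faults: $\Pi$ is a finite set of processes, $f\ge0$ a known integer; $W\subseteq\Pi$ is the set of correct processes and $F=\Pi\setminus W$ the Byzantine faulty processes, $|F|\le f$. Faulty processes may declare arbitrary slices. Slices and quorums: each process $i$ has a set $\mathcal{S}_i$ of slices (subsets of $\Pi$). $Q\subseteq\Pi$ is a quorum if every $i\in Q$ has some $S\in\mathcal{S}_i$ with $S\subseteq Q$; a quorum of $i$ is a quorum containing $i$. Knowledge graph: each process $i$ is given $\mathit{PD}_i\subseteq\Pi$; the knowledge connectivity graph $G_{\mathit{di}}$ is the directed graph on $\Pi$ with edge $(i,j)$ iff $j\in\mathit{PD}_i$. A sink component is a strongly connected component of $G_{\mathit{di}}$ from which no path leads outside it; $G_{\mathit{di}}$ is assumed to have a unique sink component, with vertex set $V_{\mathit{sink}}$. Slice construction: let $m=\lceil (|V_{\mathit{sink}}|+f+1)/2\rceil$. Every correct $i\in V_{\mathit{sink}}$ has $\mathcal{S}_i=\{S\subseteq V_{\mathit{sink}}: |S|=m\}$. Every correct $i\notin V_{\mathit{sink}}$ is given (by a sink detector) a set $V_i\subseteq V_{\mathit{sink}}$ containing at least $f+1$ correct members of $V_{\mathit{sink}}$, and has $\mathcal{S}_i=\{S\subseteq V_i: |S|=f+1\}$.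 *)

From mathcomp Require Import all_boot.
Set Implicit Arguments. Unset Strict Implicit. Unset Printing Implicit Defensive.

Definition is_quorum (P : finType) (slices : P -> {set {set P}}) (Q : {set P}) : Prop :=
  forall i, i \in Q -> exists2 S, S \in slices i & S \subset Q.

Definition kedge (P : finType) (PD : P -> {set P}) : rel P :=
  fun i j => j \in PD i.

Definition kreach (P : finType) (PD : P -> {set P}) : rel P :=
  connect (kedge PD).

Definition scc (P : finType) (PD : P -> {set P}) (x : P) : {set P} :=
  [set y | kreach PD x y && kreach PD y x].

Definition is_sink_component (P : finType) (PD : P -> {set P}) (C : {set P}) : Prop :=
  (exists x, C = scc PD x) /\
  (forall x y, x \in C -> kreach PD x y -> y \in C).

(* m = ceil((|V_sink| + f + 1) / 2) *)
Definition slice_size (n f : nat) : nat := (n + f + 2) %/ 2.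

(** The candidate quorum is [Q = {i} ∪ (V_sink ∩ W)].  With [c = |V_sink ∩ W|]
    we have [|V_sink| <= c + f] and [2f + 1 <= c], hence
    [m = ⌈(|V_sink| + f + 1)/2⌉ <= c]: every correct sink member can draw a
    slice of [m] processes from [V_sink ∩ W], and a correct [i] outside the
    sink draws its [f + 1] processes from [V_i ∩ W], which lies in [Q]. *)

From mathcomp Require Import all_boot.
From mathcomp Require Import zify.

Set Implicit Arguments.
Unset Strict Implicit.
Unset Printing Implicit Defensive.

Lemma exists_subset_card (T : finType) (A : {set T}) (k : nat) :
  k <= #|A| -> exists2 S : {set T}, S \subset A & #|S| = k.
Proof.
rewrite -bin_gt0 -cards_draws card_gt0 => /set0Pn[S].
by rewrite inE => /andP[SA /eqP cardS]; exists S.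
Qed.

Lemma exists_draw_subset (T : finType) (A B Q : {set T}) (k : nat) :
  B \subset A -> B \subset Q -> k <= #|B| ->
  exists2 S, S \in [set S : {set T} | (S \subset A) && (#|S| == k)] & S \subset Q.
Proof.
move=> BA BQ /exists_subset_card[S SB cardS].
exists S; last exact: subset_trans SB BQ.
by rewrite inE cardS eqxx (subset_trans SB BA).
Qed.

Lemma card_le_setI_setC (T : finType) (A W : {set T}) :
  #|A| <= #|A :&: W| + #|~: W|.
Proof.
by rewrite -(cardsID W A) leq_add2l subset_leq_card // setDE subsetIr.
Qed.

Lemma slice_size_le (n f c : nat) :
  n <= c + f -> 2 * f + 1 <= c -> slice_size n f <= c.
Proof. by move=> n_le c_ge; rewrite /slice_size -ltnS ltn_divLR //; lia. Qed.

Theorem theorem4 (P : finType) (f : nat) (W : {set P})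
    (PD : P -> {set P}) (slices : P -> {set {set P}}) (Vsink : {set P}) :
  #|~: W| <= f ->
  is_sink_component PD Vsink ->
  (forall C, is_sink_component PD C -> C = Vsink) ->
  2 * f + 1 <= #|Vsink :&: W| ->
  (forall i, i \in W -> i \in Vsink ->
     slices i = [set S : {set P} | (S \subset Vsink) && (#|S| == slice_size #|Vsink| f)]) ->
  (forall i, i \in W -> i \notin Vsink ->
     exists Vi : {set P},
       [/\ Vi \subset Vsink, f + 1 <= #|Vi :&: W| &
           slices i = [set S : {set P} | (S \subset Vi) && (#|S| == f + 1)]]) ->
  forall i, i \in W ->
    exists Q : {set P}, [/\ is_quorum slices Q, i \in Q & Q \subset W].
Proof.
move=> faultyW _ _ correct_sink sink_slices out_slices i iW.
have m_le : slice_size #|Vsink| f <= #|Vsink :&: W|.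
  apply: slice_size_le correct_sink.
  exact: leq_trans (card_le_setI_setC Vsink W) (leq_add (leqnn _) faultyW).
have sinkQ : Vsink :&: W \subset i |: (Vsink :&: W) by apply: subsetUr.
exists (i |: (Vsink :&: W)); split; last 2 first.
- exact: setU11.
- by rewrite subUset sub1set iW subsetIr.
move=> j jQ.
have jW : j \in W by case/setU1P: jQ => [->|/setIP[]].
have [jV | jNV] := boolP (j \in Vsink).
  by rewrite sink_slices //; apply: exists_draw_subset (subsetIl _ _) sinkQ m_le.
have [Vj [VjV correct_Vj ->]] := out_slices j jW jNV.
exact: exists_draw_subset (subsetIl _ _) (subset_trans (setSI W VjV) sinkQ) correct_Vj.
Qed.
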